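(* Let $d_1,\dots,d_n\ge1$, $\mu_i=x_i^{d_i}$, $I=\langle\mu_1,\dots,\mu_n\rangle\subseteq\mathbb K[x_1,\dots,x_n]$, and $k\ge1$ an integer. Then $I^k$ is good if and only if $I^k$ is very good.
   Context: Let $\mathbb K$ be a field, $R=\mathbb K[x_1,\dots,x_n]$, $\mathfrak m=\langle x_1,\dots,x_n\rangle$, $\mathbb N=\{0,1,2,\dots\}$. A monomial $x_1^{\alpha_1}\cdots x_n^{\alpha_n}$ is identified with the point $(\alpha_1,\dots,\alpha_n)\in\mathbb N^n$. For a monomial ideal $K$, $G(K)$ denotes its (unique) minimal monomial generating set. If $K$ is an $\mathfrak m$-primary monomial ideal, then for each $i$ there is a unique $e_i\ge1$ with $x_i^{e_i}\in G(K)$; write $\nu_i=x_i^{e_i}$ (for $K=I^k$ as in the claim, $e_i=kd_i$). For $(a_1,\dots,a_n)\in\mathbb N^n$ the box associated to $K$ is $B_{a_1,\dots,a_n}=([a_1e_1,(a_1+1)e_1]\times\cdots\times[a_ne_n,(a_n+1)e_n])\cap\mathbb N^n$; a monomial belongs to a box if its exponent vector does. $K$ is called good if for every integer $l\ge1$, every element of $G(K^l)$ belongs to some box $B_{a_1,\dots,a_n}$ with $a_1+\dots+a_n=l-1$. For a good ideal $K$ and $a\in\mathbb N^n$, with $l=a_1+\dots+a_n+1$, define $K_{a}=\left\langle \frac{m}{\nu_1^{a_1}\cdots\nu_n^{a_n}} : m\in B_{a}\cap G(K^l)\right\rangle$. A good ideal $K$ is called very good if $K_a=K$ for all $a\in\mathbb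 N^n$. *)

(* Monomial ideals of K[x_1..x_n] are encoded combinatorially:
   a monomial x^alpha is its exponent vector alpha : 'I_n -> nat, and a
   monomial ideal is identified with the (upward closed) set of exponent
   vectors of the monomials it contains. *)
From mathcomp Require Import all_boot.
Set Implicit Arguments. Unset Strict Implicit. Unset Printing Implicit Defensive.

Definition mono (n : nat) := 'I_n -> nat.

Definition mdvd n (a b : mono n) : Prop := forall i, a i <= b i.

Definition mmul n (a b : mono n) : mono n := fun i => a i + b i.
Definition mdiv n (a b : mono n) : mono n := fun i => a i - b i.

Definition xpow n (i : 'I_n) (e : nat) : mono n := fun j => if j == i then e else 0.

Definition mideal n := mono n -> Prop.

Definition mgen n (S : mono n -> Prop) : mideal n :=
  fun b => exists2 a, S a & mdvd a b.

Fixpoint mpow n (K : mideal n) (l : nat) : mideal n :=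
  match l with
  | 0 => fun _ => True
  | l'.+1 => fun b => exists a c, [/\ K a, mpow K l' c & mdvd (mmul a c) b]
  end.

Definition mideal_eq n (J K : mideal n) : Prop := forall b, J b <-> K b.

Definition mingens n (K : mideal n) : mono n -> Prop :=
  fun m => K m /\ forall m', K m' -> mdvd m' m -> m' = m.

Definition pure_gens n (K : mideal n) (e : mono n) : Prop :=
  forall i, 1 <= e i /\ mingens K (xpow i (e i)).

Definition msum n (a : mono n) : nat := \sum_(i < n) a i.

Definition in_box n (e a m : mono n) : Prop :=
  forall i, a i * e i <= m i /\ m i <= (a i).+1 * e i.

Definition box_cond n (K : mideal n) (e : mono n) : Prop :=
  forall l, 1 <= l -> forall m, mingens (mpow K l) m ->
    exists a : mono n, msum a = l.-1 /\ in_box e a m.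

Definition good n (K : mideal n) : Prop :=
  exists e, pure_gens K e /\ box_cond K e.

(* K_a = < m / (nu_1^{a_1} ... nu_n^{a_n}) : m in B_a cap G(K^l) >, l = |a|+1;
   nu_1^{a_1}...nu_n^{a_n} has exponent vector (a_i e_i)_i *)
Definition K_sub n (K : mideal n) (e a : mono n) : mideal n :=
  mgen (fun q => exists2 m, in_box e a m /\ mingens (mpow K (msum a).+1) m
                          & q = mdiv m (fun i => a i * e i)).

Definition very_good n (K : mideal n) : Prop :=
  exists e, [/\ pure_gens K e, box_cond K e & forall a, mideal_eq (K_sub K e a) K].

Definition Ipure n (d : mono n) : mideal n := mgen (fun a => exists i, a = xpow i (d i)).

(* I^p is generated by the monomials mu^c = x^(d*c) with |c| = p, and these are
   exactly its minimal generators; in particular e_i = k d_i for I^k.  A minimal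
   generator mu^c of I^(k(|a|+1)) lies in the box B_a iff a_i k <= c_i <= (a_i+1) k,
   and dividing it by nu^a = mu^(k a) gives mu^(c - k a) with |c - k a| = k.  Every
   mu^c' with |c'| = k arises this way from c = c' + k a, so I^k_a = I^k for every a,
   whether or not the box condition holds. *)
From Stdlib Require Import FunctionalExtensionality.
From mathcomp Require Import all_boot zify.
Set Implicit Arguments. Unset Strict Implicit. Unset Printing Implicit Defensive.

Section TotalDegree.
Variable n : nat.
Implicit Types a b c : mono n.

Lemma msumD a b : msum (mmul a b) = msum a + msum b.
Proof. by rewrite /msum big_split. Qed.

Lemma msumB a b : mdvd a b -> msum (mdiv b a) = msum b - msum a.
Proof.
move=> ab; have -> : msum b = msum (mmul a (mdiv b a)).
  by apply: eq_bigr => i _; rewrite /mmul /mdiv subnKC.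
by rewrite msumD addKn.
Qed.

Lemma msum_mulr a k : msum (fun i => a i * k) = msum a * k.
Proof. by rewrite /msum big_distrl. Qed.

Lemma leq_coord_msum c i : c i <= msum c.
Proof. by rewrite /msum (bigD1 i) //= leq_addr. Qed.

Lemma msum_xpow (i : 'I_n) v : msum (xpow i v) = v.
Proof. by rewrite /msum (bigD1 i) //= /xpow eqxx big1 ?addn0 // => j /negbTE ->. Qed.

Lemma msum_gt0 c : 0 < msum c -> exists i, 0 < c i.
Proof.
move=> c_gt0; apply/existsP; apply: contraTT c_gt0 => /existsPn c0.
by rewrite -eqn0Ngt sum_nat_eq0; apply/forallP => i; rewrite eqn0Ngt c0.
Qed.

Lemma exists_mdvd_msum p c : p <= msum c -> exists2 c1, mdvd c1 c & msum c1 = p.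
Proof.
elim: p => [|p IHp] p_le.
  by exists (fun _ => 0) => //; rewrite /msum big1.
have [c1 c1c c1p] := IHp (ltnW p_le).
have [i ci_gt] : exists i, 0 < mdiv c c1 i.
  by apply: msum_gt0; rewrite msumB // c1p subn_gt0.
exists (mmul c1 (xpow i 1)); last by rewrite msumD msum_xpow c1p addn1.
move=> j; rewrite /mmul /mdiv /xpow in ci_gt *.
by case: eqP => [->|_]; rewrite ?addn0 // addn1 -subn_gt0.
Qed.

End TotalDegree.

Definition mu_pow n (d c : mono n) : mono n := fun i => d i * c i.

Definition Ipow n (d : mono n) (p : nat) : mideal n :=
  fun b => exists2 c, msum c = p & mdvd (mu_pow d c) b.

Lemma mingens_eq n (J J' : mideal n) : mideal_eq J J' ->
  forall m, mingens J m <-> mingens J' m.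
Proof.
by move=> JJ' m; split=> -[Jm m_min]; split=> [|m' /JJ'/m_min //]; apply/JJ'.
Qed.

Section PowersOfPureIdeal.
Variables (n : nat) (d : mono n).
Implicit Types b c e : mono n.

Lemma mpow_Ipow (K : mideal n) p : mideal_eq K (Ipow d p) ->
  forall l, mideal_eq (mpow K l) (Ipow d (p * l)).
Proof.
move=> K_eq; elim=> [|l IHl] b /=.
  split=> // _; exists (fun _ => 0); first by rewrite muln0 /msum big1.
  by move=> i; rewrite /mu_pow muln0.
split=> [[a [c [/K_eq[c1 c1p c1a] /IHl[c2 c2l c2c] acb]]]|[c cpl cb]].
  exists (mmul c1 c2); first by rewrite msumD c1p c2l mulnS.
  move=> i; apply: leq_trans (acb i).
  by rewrite /mu_pow /mmul mulnDr; apply: leq_add (c1a i) (c2c i).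
have [c1 c1c c1p] : exists2 c1, mdvd c1 c & msum c1 = p.
  by apply: exists_mdvd_msum; rewrite cpl mulnS leq_addr.
exists (mu_pow d c1), (mu_pow d (mdiv c c1)); split.
- by apply/K_eq; exists c1.
- by apply/IHl; exists (mdiv c c1); rewrite // msumB // cpl c1p mulnS addKn.
- by move=> i; rewrite /mmul /mu_pow /mdiv -mulnDr subnKC //; apply: cb.
Qed.

Lemma Ipure_Ipow1 : mideal_eq (Ipure d) (Ipow d 1).
Proof.
move=> b; split=> [[_ [i ->] db]|[c c1 cb]].
  exists (xpow i 1); first exact: msum_xpow.
  move=> j; apply: leq_trans (db j).
  by rewrite /mu_pow /xpow; case: eqP => [->|_]; rewrite ?muln1 ?muln0.
have [i ci_gt0] : exists i, 0 < c i by apply: msum_gt0; rewrite c1.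
exists (xpow i (d i)); first by exists i.
move=> j; rewrite /xpow; case: eqP => [->|_] //.
by apply: leq_trans (cb i); rewrite /mu_pow leq_pmulr.
Qed.

Hypothesis d_gt0 : forall i, 0 < d i.

Lemma mingens_IpowP p m :
  mingens (Ipow d p) m <-> exists2 c, msum c = p & m = mu_pow d c.
Proof.
split=> [[[c cp cm] m_min]|[c cp ->]].
  by exists c => //; apply/esym/m_min => //; exists c.
split=> [|m' [c' c'p c'm] m'c]; first by exists c.
have c'c i : c' i <= c i.
  by rewrite -(leq_pmul2l (d_gt0 i)); apply: leq_trans (c'm i) (m'c i).
have c'_eq : c' = c.
  apply: functional_extensionality => i; apply/eqP; rewrite eqn_leq c'c /=.
  have := leq_coord_msum (mdiv c c') i.
  by rewrite msumB // cp c'p subnn leqn0 subn_eq0.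
apply: functional_extensionality => i; apply/eqP; rewrite eqn_leq m'c -c'_eq.
exact: c'm.
Qed.

Lemma pure_gens_Ipow k e : pure_gens (Ipow d k) e -> forall i, e i = d i * k.
Proof.
move=> e_pure i; have [_ /mingens_IpowP[c ck xc]] := e_pure i.
have c0 j : j != i -> c j = 0.
  move=> ji; have := congr1 (fun m => m j) xc; rewrite /xpow /mu_pow (negbTE ji).
  by move/esym/eqP; rewrite muln_eq0 eqn0Ngt d_gt0 => /eqP.
have -> : k = c i by rewrite -ck /msum (bigD1 i) //= big1 ?addn0.
by have := congr1 (fun m => m i) xc; rewrite /xpow eqxx.
Qed.

Section Boxes.
Variables (k : nat) (K : mideal n) (e a : mono n).
Hypotheses (K_eq : mideal_eq K (Ipow d k)) (e_eq : forall i, e i = d i * k).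

Let Kl_eq := mpow_Ipow K_eq (msum a).+1.

Lemma K_sub_in_K b : K_sub K e a b -> K b.
Proof.
move=> [_ [m [m_box /(mingens_eq Kl_eq)/mingens_IpowP[c c_deg m_eq]] ->] mb].
subst m.
have akc i : a i * k <= c i.
  by have [+ _] := m_box i; rewrite e_eq /mu_pow mulnCA leq_pmul2l.
apply/K_eq; exists (mdiv c (fun i => a i * k)).
  by rewrite msumB // c_deg msum_mulr mulnS mulnC addnK.
by move=> i; apply: leq_trans (mb i); rewrite /mdiv /mu_pow e_eq mulnBr mulnCA.
Qed.

Lemma K_in_K_sub b : K b -> K_sub K e a b.
Proof.
move/K_eq=> [c' c'k c'b]; set c := mmul c' (fun i => a i * k).
exists (mu_pow d c'); last exact: c'b.
exists (mu_pow d c); first split.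
- move=> i; have c'ik : c' i <= k by rewrite -c'k leq_coord_msum.
  by rewrite e_eq /mu_pow /c /mmul; nia.
- apply/(mingens_eq Kl_eq)/mingens_IpowP; exists c => //.
  by rewrite msumD c'k msum_mulr mulnS mulnC.
- by apply: functional_extensionality => i; rewrite /mdiv /mu_pow /c /mmul e_eq; lia.
Qed.

Lemma K_sub_eq : mideal_eq (K_sub K e a) K.
Proof. by move=> b; split; [exact: K_sub_in_K | exact: K_in_K_sub]. Qed.

End Boxes.

Lemma good_very_good_Ipow k (K : mideal n) : mideal_eq K (Ipow d k) ->
  good K <-> very_good K.
Proof.
move=> K_eq; split=> [[e [e_pure e_box]]|[e [e_pure e_box _]]]; exists e => //.
have e_eq : forall i, e i = d i * k.
  apply: pure_gens_Ipow => i; have [e_gt0 e_min] := e_pure i.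
  by split=> //; apply/(mingens_eq K_eq).
by split=> // a; exact: K_sub_eq a K_eq e_eq.
Qed.

End PowersOfPureIdeal.

Theorem mainTheorem19 (n : nat) (d : 'I_n -> nat) (k : nat) :
  (forall i, 1 <= d i) -> 1 <= k ->
  (good (mpow (Ipure d) k) <-> very_good (mpow (Ipure d) k)).
Proof.
move=> d_gt0 _; apply: (good_very_good_Ipow d_gt0 (k := k)).
by rewrite -[k in Ipow _ k]mul1n; exact: mpow_Ipow (Ipure_Ipow1 d) k.
Qed.
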